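(* Let $s\ge2$ and let $\mathcal{C}$ be an $[n,k,d]_q$ linear code with multiple $(r_i,\delta_i)_{i\in[s]}$ localities with respect to a partition $\mathcal{T}_1,\dots,\mathcal{T}_s$ of $[n]$, $n_i=|\mathcal{T}_i|$, $r_1\le\dots\le r_s$, $\delta_1\ge\dots\ge\delta_s\ge2$. Let $\Delta_0=0$ and $\Delta_j=\sum_{i=1}^{j}\lceil n_i/(r_i+\delta_i-1)\rceil(\delta_i-1)$ for $j=1,\dots,s-1$. Suppose $\sum_{i=1}^{s-1}r_i\lceil n_i/(r_i+\delta_i-1)\rceil\le k-1$ and, for each $j=1,\dots,s-1$, $$r_j\left\lceil\frac{\Delta_j-\Delta_{j-1}-1}{\delta_j-1}\right\rceil+(\Delta_j-\Delta_{j-1}-1)<n_j.$$ Then $$d\le n-k+1-\sum_{i=1}^{s-1}\left\lceil\frac{n_i}{r_i+\delta_i-1}\right\rceil(\delta_i-1)-\left(\left\lceil\frac{k-\sum_{i=1}^{s-1}r_i\lceil n_i/(r_i+\delta_i-1)\rceil}{r_s}\right\rceil-1\right)(\delta_s-1).$$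
   Context: $[n]=\{1,\dots,n\}$. For an $[n,k,d]_q$ linear code with generator matrix columns $\vec g_1,\dots,\vec g_n$, a regenerating set of coordinate $i$ is a (minimal) subset $R\subseteq[n]$ with $i\in R$ such that $\vec g_i$ is an $\mathbb{F}_q$-linear combination of $\{\vec g_j\}_{j\in R\setminus\{i\}}$ and no proper subset of $R\setminus\{i\}$ suffices; $\mathcal{R}_i$ is the set of regenerating sets of coordinate $i$. Multiple $(r_i,\delta_i)_{i\in[s]}$ localities: $\mathcal{T}_1,\dots,\mathcal{T}_s$ is a partition of $[n]$, $r_1\le\dots\le r_s$ and $\delta_1\ge\dots\ge\delta_s\ge2$ are integers, and for each $i\in[s]$ and each $\iota\in\mathcal{T}_i$ there is $S_\iota\subseteq\mathcal{T}_i$ with $\iota\in S_\iota$, $\delta_i\le|S_\iota|\le r_i+\delta_i-1$, such that for every $E\subseteq S_\iota$ with $|E|=\delta_i-1$ and every $j\in E$, $(S_\iota\setminus E)\cup\{j\}\in\mathcal{R}_j$. *)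

From mathcomp Require Import all_boot all_order all_algebra.
Set Implicit Arguments. Unset Strict Implicit. Unset Printing Implicit Defensive.
Import GRing.Theory.
Local Open Scope ring_scope.

Definition ceil_div (a b : nat) : nat := ((a + b.-1) %/ b)%N.

Section Codes.
Variables (F : finFieldType) (k n : nat).

Definition wt (c : 'rV[F]_n) : nat := #|[set j | c 0 j != 0]|.

Definition codeword (G : 'M[F]_(k, n)) (c : 'rV[F]_n) : Prop :=
  exists m : 'rV[F]_k, c = m *m G.

Definition is_min_dist (G : 'M[F]_(k, n)) (d : nat) : Prop :=
  (exists c, codeword G c /\ c != 0 /\ wt c = d) /\
  (forall c, codeword G c -> c != 0 -> (d <= wt c)%N).

Definition lin_comb (G : 'M[F]_(k, n)) (i : 'I_n) (S : {set 'I_n}) : Prop :=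
  exists a : 'I_n -> F, col i G = \sum_(j in S) a j *: col j G.

Definition regen (G : 'M[F]_(k, n)) (i : 'I_n) (R : {set 'I_n}) : Prop :=
  i \in R /\ lin_comb G i (R :\ i) /\
  (forall S : {set 'I_n}, S \proper (R :\ i) -> ~ lin_comb G i S).

(* Multiple (r_i, delta_i)_{i in [s]} localities w.r.t. partition T
   (0-based indices i : 'I_s). *)
Definition multiple_localities (s : nat) (G : 'M[F]_(k, n))
  (T : 'I_s -> {set 'I_n}) (r delta : 'I_s -> nat) : Prop :=
  (forall i j : 'I_s, i != j -> [disjoint T i & T j]) /\
  (\bigcup_(i < s) T i = setT) /\
  (forall i, T i != set0) /\
  (forall i j : 'I_s, (i <= j)%N -> (r i <= r j)%N) /\
  (forall i j : 'I_s, (i <= j)%N -> (delta j <= delta i)%N) /\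
  (forall i, (2 <= delta i)%N) /\
  (forall (i : 'I_s) (iota : 'I_n), iota \in T i ->
     exists S : {set 'I_n},
       [/\ S \subset T i, iota \in S,
           (delta i <= #|S|)%N, (#|S| <= r i + delta i - 1)%N &
           forall E : {set 'I_n}, E \subset S -> #|E| = (delta i - 1)%N ->
             forall j, j \in E -> regen G j ((S :\: E) :|: [set j])]).

End Codes.

(* Delta_j = sum_{i=1}^{j} ceil(n_i/(r_i+delta_i-1)) (delta_i-1), with the
   paper's 1-based index i corresponding to our 0-based index i-1;
   Delta s0 0 = 0. *)
Definition Delta (s : nat) (nn r delta : 'I_s -> nat) (j : nat) : nat :=
  (\sum_(i < s | (i < j)%N) ceil_div (nn i) (r i + delta i - 1) * (delta i - 1))%N.

From mathcomp Require Import all_boot all_order all_algebra.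
From mathcomp Require Import zify.
Set Implicit Arguments. Unset Strict Implicit. Unset Printing Implicit Defensive.
Import GRing.Theory Num.Theory.

(* Let rk X be the rank of the columns of G indexed by X and excess X = |X| - rk X.
   If rk X < k, enlarging X to rank k - 1 keeps its excess, and some nonzero
   codeword vanishes on the enlarged set, so d <= n - k + 1 - excess X.
   Excess comes from the local repair groups S (|S| <= r + delta - 1, any
   delta - 1 coordinates of S spanned by the others): adding S to X either keeps
   the rank or gains delta - 1 excess for at most r rank. *)

Lemma cardsUD (T : finType) (A B : {set T}) : #|A :|: B| = #|A| + #|B :\: A|.
Proof.
have := cardsUI A B; rewrite cardsD setIC.
have := subset_leq_card (subsetIl B A); lia.
Qed.

Lemma subset_card_ext (T : finType) (A B : {set T}) t :
  A \subset B -> #|A| + t <= #|B| ->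
  exists E : {set T}, [/\ A \subset E, E \subset B & #|E| = #|A| + t].
Proof.
elim: t => [|t IH] sAB le; first by exists A; rewrite addn0.
have [|E [sAE sEB cE]] := IH sAB; first lia.
have /properP[_ [x xB xE]] : E \proper B by rewrite properEcard sEB cE; lia.
exists (x |: E); split.
- exact: subset_trans sAE (subsetUr _ _).
- by rewrite subUset sub1set xB.
- by rewrite cardsU1 xE cE addnS.
Qed.

Lemma greedy_extension (T : finType) (P Q : {set T} -> Prop) X0 :
  P X0 -> (forall Y, P Y -> Q Y \/ exists2 Y', P Y' & Y \proper Y') ->
  exists2 Y, P Y & Q Y.
Proof.
move=> PX0 grow.
suff: forall m (Y : {set T}), #|T| - #|Y| <= m -> P Y -> exists2 Y, P Y & Q Y.
  by apply; [exact: leqnn | exact: PX0].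
elim=> [|m IH] Y hm PY; case: (grow Y PY) => [QY|[Y' PY' /proper_card ltYY']];
  try by exists Y.
all: have := subset_leq_card (subsetT Y'); rewrite cardsT => leY'.
- lia.
- by apply: IH PY'; lia.
Qed.

Lemma big_ord_ltS (R : Type) (idx : R) (op : Monoid.com_law idx) s
    (F : 'I_s -> R) (j : 'I_s) :
  \big[op/idx]_(i < s | i < j.+1) F i = op (\big[op/idx]_(i < s | i < j) F i) (F j).
Proof.
rewrite (bigD1 j) ?ltnSn //= Monoid.mulmC; congr (op _ _); apply: eq_bigl => i.
by rewrite ltnS ltn_neqAle andbC.
Qed.

Lemma leq_ceil_divLR a b m : 0 < b -> (ceil_div a b <= m) = (a <= m * b).
Proof. by move=> b_gt0; rewrite /ceil_div -ltnS ltn_divLR // mulSn; lia. Qed.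

Lemma leq_ceil_div a b m : 0 < b -> m * b <= a -> m <= ceil_div a b.
Proof.
by move=> b_gt0 le; rewrite /ceil_div leq_divRL //; apply: leq_trans le (leq_addr _ _).
Qed.

Lemma DeltaS s (nn r delta : 'I_s -> nat) (j : 'I_s) :
  Delta nn r delta j.+1 =
  Delta nn r delta j + ceil_div (nn j) (r j + delta j - 1) * (delta j - 1).
Proof. by rewrite /Delta big_ord_ltS. Qed.

Section ColumnRank.
Variables (F : fieldType) (k n : nat) (G : 'M[F]_(k, n)).
Implicit Types (X Y : {set 'I_n}) (j : 'I_n).
Local Open Scope ring_scope.

(* The columns of G indexed by X, as the rows of an n x k matrix (zero rows elsewhere). *)
Definition cols X : 'M[F]_(n, k) := \matrix_(j, a) (if j \in X then G a j else 0).
Definition rk X := \rank (cols X).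
Definition spans X j := (row j G^T <= cols X)%MS.

Lemma row_cols X j : row j (cols X) = if j \in X then row j G^T else 0.
Proof. by apply/rowP => a; rewrite !mxE; case: ifP; rewrite ?mxE. Qed.

Lemma cols_setT : cols setT = G^T.
Proof. by apply/matrixP => j a; rewrite !mxE in_setT. Qed.

Lemma cols_subset X Y : X \subset Y -> (cols X <= cols Y)%MS.
Proof.
move=> sXY; apply/row_subP => j; rewrite row_cols; case: ifP => jX; last exact: sub0mx.
by have := row_sub j (cols Y); rewrite row_cols (subsetP sXY _ jX).
Qed.

Lemma spans_mem X j : j \in X -> spans X j.
Proof. by move=> jX; have := row_sub j (cols X); rewrite row_cols jX. Qed.

Lemma spans_subset X Y j : X \subset Y -> spans X j -> spans Y j.
Proof. by move=> /cols_subset sXY sj; apply: submx_trans sj sXY. Qed.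

Lemma cols_setU X Y : (cols (X :|: Y) <= cols X + cols Y)%MS.
Proof.
apply/row_subP => j; rewrite row_cols in_setU; case: ifP => [/orP[]|_].
- by move/spans_mem/submx_trans; apply; exact: addsmxSl.
- by move/spans_mem/submx_trans; apply; exact: addsmxSr.
- exact: sub0mx.
Qed.

Lemma cols_spanned X Y : {in Y, forall j, spans X j} -> (cols (X :|: Y) <= cols X)%MS.
Proof.
move=> spY; apply/row_subP => j; rewrite row_cols in_setU.
by case: ifP => [/orP[/spans_mem|/spY] //|_]; exact: sub0mx.
Qed.

Lemma rk_spanned X Y : {in Y, forall j, spans X j} -> rk (X :|: Y) = rk X.
Proof.
move=> spY; apply/eqP; rewrite eqn_leq !mxrankS ?cols_spanned //.
exact/cols_subset/subsetUl.
Qed.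

Lemma rk_setU X Y : (rk (X :|: Y) <= rk X + rk Y)%N.
Proof. exact: leq_trans (mxrankS (cols_setU X Y)) (mxrank_adds_leqif _ _).1. Qed.

Lemma rk_le_card X : (rk X <= #|X|)%N.
Proof.
have sX : (cols X <= \sum_(j in X) <<row j G^T>>)%MS.
  apply/row_subP => j; rewrite row_cols; case: ifP => jX; last exact: sub0mx.
  by apply: (sumsmx_sup j) => //; rewrite genmxE.
apply: leq_trans (mxrankS sX) _; rewrite -sum1_card.
elim/big_rec2: _ => [|j A m _ IH]; first by rewrite mxrank0.
apply: leq_trans (mxrank_adds_leqif _ _).1 _.
by rewrite genmxE leq_add // rank_leq_row.
Qed.

Lemma rk_card X Y : (rk (X :|: Y) <= rk X + #|Y :\: X|)%N.
Proof.
have -> : X :|: Y = X :|: (Y :\: X).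
  by apply/setP => j; rewrite !inE; case: (j \in X).
exact: leq_trans (rk_setU _ _) (leq_add (leqnn _) (rk_le_card _)).
Qed.

Lemma rk_setU1 X j : (rk (j |: X) <= (rk X).+1)%N.
Proof.
rewrite setUC; apply: leq_trans (rk_setU _ _) _.
by rewrite -addn1 leq_add2l; apply: leq_trans (rk_le_card _) _; rewrite cards1.
Qed.

Lemma rk_grow X Y j : X \subset Y -> j \in Y -> ~~ spans X j -> (rk X < rk Y)%N.
Proof.
move=> /cols_subset sXY jY; apply: contraR; rewrite -leqNgt => leYX.
have eqXY : (cols Y <= cols X)%MS by rewrite -(mxrank_leqif_sup sXY).2 eqn_leq mxrankS.
exact: submx_trans (spans_mem jY) eqXY.
Qed.

Hypothesis rankG : \rank G = k.

Lemma exists_unspanned X : (rk X < k)%N -> exists2 j, j \notin X & ~~ spans X j.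
Proof.
move=> ltXk; have [j nj] : exists j, ~~ spans X j.
  apply/existsP; apply: contraLR ltXk => /existsPn spX.
  rewrite -leqNgt -{1}rankG -mxrank_tr -cols_setT -(setUT X) mxrankS //.
  by apply: cols_spanned => j _; exact/negPn.
by exists j => //; apply: contra nj; exact: spans_mem.
Qed.

End ColumnRank.

Section Excess.
Variables (F : fieldType) (k n : nat) (G : 'M[F]_(k, n)).
Implicit Types (X Y S E : {set 'I_n}).
Local Notation rk := (rk G).
Local Notation spans := (spans G).

Definition excess X := #|X| - rk X.

Definition repair_group e S :=
  e <= #|S| /\
  forall E, E \subset S -> #|E| = e -> {in E, forall j, spans (S :\: E) j}.

Lemma repair_group_gain e X S : repair_group e S ->
  rk (X :|: S) = rk X \/ rk (X :|: S) + e <= rk X + #|S :\: X|.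
Proof.
move=> [eS recover]; have [le_eU|lt_Ue] := leqP e #|S :\: X|.
- have [|E [_ sEU cE]] := subset_card_ext (t := e) (sub0set (S :\: X)).
    by rewrite cards0.
  rewrite cards0 in cE; have sES := subset_trans sEU (subsetDl S X).
  have -> : X :|: S = (X :|: (S :\: E)) :|: E.
    apply/setP => j; rewrite !inE.
    by case: (boolP (j \in E)) => [/(subsetP sES)->|]; rewrite ?orbT ?orbF.
  right; rewrite rk_spanned => [|j /(recover E sES cE)]; last exact/spans_subset/subsetUr.
  apply: leq_trans (leq_add (rk_card _ _ _) (leqnn e)) _.
  have -> : (S :\: E) :\: X = (S :\: X) :\: E by rewrite setDDl setUC -setDDl.
  rewrite cardsDS //; lia.
- have [|E [sUE sES cE]] := subset_card_ext (t := e - #|S :\: X|) (subsetDl S X).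
    lia.
  have {}cE : #|E| = e by lia.
  have sSEX : S :\: E \subset X.
    apply/subsetP => j; rewrite !inE => /andP[jE jS]; apply: contraNT jE => jX.
    by apply: (subsetP sUE); rewrite !inE jX jS.
  left; apply: rk_spanned => j jS; case: (boolP (j \in E)) => [/(recover E sES cE)|jE].
    exact: spans_subset.
  by apply/spans_mem/(subsetP sSEX); rewrite !inE jE jS.
Qed.

Section CorankOne.
Hypothesis rankG : \rank G = k.

Lemma extend_to_corank_one X :
  rk X < k -> exists2 Y, (rk Y).+1 = k & excess X <= excess Y.
Proof.
move=> ltXk.
have [||Y [_ exY] rkY] := greedy_extension (X0 := X)
  (P := fun Y => rk Y < k /\ excess X <= excess Y) (Q := fun Y => (rk Y).+1 = k) => //.
- move=> Y [ltYk exY]; have [ltY1k|] := ltnP (rk Y).+1 k; last by left; lia.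
  have [p pY np] := exists_unspanned rankG ltYk.
  have ltYpY := rk_grow (subsetUr [set p] Y) (setU11 p Y) np.
  have rkpY : rk (p |: Y) <= (rk Y).+1 := rk_setU1 G Y p.
  have := cardsU1 p Y; move: exY; rewrite pY /excess /=.
  right; exists (p |: Y); first by split; lia.
  by apply: properUr; rewrite sub1set.
- by exists Y.
Qed.

End CorankOne.

Section Localities.
Variables (s : nat) (T : 'I_s -> {set 'I_n}) (r e : 'I_s -> nat).

(* With c = ceil(n_i / (r_i + delta_i - 1)) this is the theorem's hypothesis on
   n_i, since then c * (delta_i - 1) = Delta_i - Delta_(i-1). *)
Definition phase_room i c :=
  r i * ceil_div (c * e i - 1) (e i) + (c * e i - 1) < #|T i|.

Lemma phase_not_exhausted i X0 Y a c : 0 < e i -> phase_room i c ->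
  [disjoint X0 & T i] -> X0 \subset Y -> rk Y <= rk X0 + r i * a ->
  excess X0 + a * e i <= excess Y -> excess Y < excess X0 + c * e i ->
  ~~ (T i \subset Y).
Proof.
move=> e_gt0 room disX0 sX0Y rkY exY exYc; apply/negP => sTY.
have sTYX0 : T i \subset Y :\: X0.
  by rewrite setDE subsetI sTY -disjoints_subset disjoint_sym.
have := subset_leq_card sTYX0; rewrite cardsDS //.
have /(leq_ceil_div e_gt0)/(leq_mul (leqnn (r i))) : a * e i <= c * e i - 1 by lia.
move: room exY exYc; rewrite /phase_room /excess.
have := rk_le_card G Y; have := rk_le_card G X0; lia.
Qed.

Hypothesis repair_groups : forall i p, p \in T i ->
  exists2 S : {set 'I_n}, [/\ S \subset T i, p \in S & #|S| <= r i + e i] &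
    repair_group (e i) S.

Lemma repair_group_extension i X p : p \in T i -> p \notin X ->
  exists X', [/\ X \proper X', p \in X', X' \subset X :|: T i &
    rk X' = rk X \/ rk X' <= rk X + r i /\ excess X + e i <= excess X'].
Proof.
move=> pT pX; have [S [sST pS cS] gS] := repair_groups pT.
exists (X :|: S); split.
- by apply: properUl; apply/subsetPn; exists p.
- by rewrite inE pS orbT.
- exact: setUS.
- have := cardsUD X S; have := subset_leq_card (subsetDl S X); rewrite /excess.
  have := rk_le_card G X; have := rk_le_card G (X :|: S).
  by case: (repair_group_gain X gS) => ?; [left | right]; lia.
Qed.

Lemma phase_extension i X0 c : 0 < e i -> phase_room i c -> [disjoint X0 & T i] ->
  exists2 X : {set 'I_n}, X \subset X0 :|: T i &
    rk X <= rk X0 + r i * c /\ excess X0 + c * e i <= excess X.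
Proof.
move=> e_gt0 room disX0.
(* a counts the groups added so far that raised the rank. *)
pose inv Y := [/\ X0 \subset Y, Y \subset X0 :|: T i & exists2 a, a <= c &
  rk Y <= rk X0 + r i * a /\ excess X0 + a * e i <= excess Y].
have [||Y [_ sY [a le_ac [rkY _]]] exY] := greedy_extension (X0 := X0) (P := inv)
  (Q := fun Y => excess X0 + c * e i <= excess Y).
- by split; [exact: subxx | exact: subsetUl | exists 0; rewrite ?muln0 ?mul0n ?addn0].
- move=> Y [sX0Y sY [a le_ac [rkY exY]]].
  have [|exYc] := leqP (excess X0 + c * e i) (excess Y); first by left.
  have /subsetPn[p pT pY] := phase_not_exhausted e_gt0 room disX0 sX0Y rkY exY exYc.
  have [Y' [ltYY' _ sY' gainY']] := repair_group_extension pT pY.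
  right; exists Y' => //; split.
  + exact: subset_trans sX0Y (proper_sub ltYY').
  + by apply: subset_trans sY' _; rewrite subUset sY subsetUr.
  case: gainY' => [eqrk | [rkY' exY']].
    exists a => //; rewrite eqrk; split => //; move: exY; rewrite /excess eqrk.
    by have := proper_card ltYY'; lia.
  have ltac : a < c by rewrite -(ltn_pmul2r e_gt0); lia.
  by exists a.+1 => //; rewrite mulnS mulSn; split; lia.
- exists Y => //; split => //; apply: leq_trans rkY _.
  by rewrite leq_add2l leq_mul2l le_ac orbT.
Qed.

Section Phases.
Hypothesis T_disjoint : forall i j : 'I_s, i != j -> [disjoint T i & T j].

Lemma phases_extension (c : 'I_s -> nat) j : j <= s ->
  (forall i : 'I_s, i < j -> 0 < e i /\ phase_room i (c i)) ->
  exists2 X : {set 'I_n}, X \subset \bigcup_(i < s | i < j) T i &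
    rk X <= \sum_(i < s | i < j) r i * c i /\ \sum_(i < s | i < j) c i * e i <= excess X.
Proof.
elim: j => [|j IH] le_js room.
  exists set0; first exact: sub0set.
  by rewrite !big_pred0 //; have := rk_le_card G set0; rewrite cards0.
pose i0 : 'I_s := Ordinal le_js.
have [|X sX [rkX exX]] := IH (ltnW le_js).
  by move=> i lt_ij; apply: room; exact: ltnW.
have disX : [disjoint X & T i0].
  apply: disjointWl sX _; rewrite disjoint_sym; apply: bigcup_disjoint => i lt_ij.
  by apply: T_disjoint; rewrite -val_eqE /= gtn_eqF.
have [e_gt0 room0] := room i0 (ltnSn j).
have [X' sX' [rkX' exX']] := phase_extension e_gt0 room0 disX.
exists X'.
  by rewrite (big_ord_ltS _ _ i0); apply: subset_trans sX' _; exact: setSU.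
rewrite !(big_ord_ltS _ _ i0) /=; split.
  by apply: leq_trans rkX' _; rewrite leq_add2r.
by apply: leq_trans exX'; rewrite leq_add2r.
Qed.

End Phases.

Section FillRank.
Hypothesis rankG : \rank G = k.
Hypothesis T_cover : forall p, exists i, p \in T i.
Variables (rs es : nat).
Hypothesis r_le : forall i, r i <= rs.
Hypothesis e_ge : forall i, es <= e i.

Lemma fill_rank X0 K : rk X0 <= K < k ->
  exists2 X : {set 'I_n}, rk X < k &
    exists t, excess X0 + t * es <= excess X /\ k <= K + t.+1 * rs.
Proof.
move=> /andP[rkX0 ltKk].
pose inv Y := rk Y < k /\ exists t, rk Y <= K + t * rs /\ excess X0 + t * es <= excess Y.
have [||X [ltXk [t [rkX exX]]] full] := greedy_extension (X0 := X0) (P := inv)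
  (Q := fun Y => k <= rk Y + rs).
- by split; [lia | exists 0; rewrite !mul0n !addn0].
- move=> Y [ltYk [t [rkY exY]]]; have [|notfull] := leqP k (rk Y + rs); first by left.
  have [p pY np] := exists_unspanned rankG ltYk.
  have [i pT] := T_cover p.
  have [Y' [ltYY' pY' _ [eqrk|[rkY' exY']]]] := repair_group_extension pT pY.
    by have := rk_grow (proper_sub ltYY') pY' np; rewrite eqrk ltnn.
  right; exists Y' => //; have := r_le i; have := e_ge i => ? ?.
  by split; [lia | exists t.+1; rewrite mulSn; lia].
- by exists X => //; exists t; rewrite mulSn; lia.
Qed.

End FillRank.

End Localities.

End Excess.

Section Codes.
Variables (F : finFieldType) (k n : nat) (G : 'M[F]_(k, n)).
Implicit Types (X Z W : {set 'I_n}) (j : 'I_n).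
Local Open Scope ring_scope.

Lemma lin_comb_spans j Z W : Z \subset W -> lin_comb G j Z -> spans G W j.
Proof.
move=> sZW [a colj]; rewrite /spans -tr_col colj raddf_sum /=.
apply: summx_sub => l lZ; rewrite linearZ /= tr_col; apply: scalemx_sub.
exact/spans_mem/(subsetP sZW).
Qed.

Lemma localities_repair_groups s T (r delta : 'I_s -> nat) :
  multiple_localities G T r delta -> forall i p, p \in T i ->
  exists2 S : {set 'I_n},
    [/\ S \subset T i, p \in S & (#|S| <= r i + (delta i - 1))%N] &
    repair_group G (delta i - 1) S.
Proof.
case=> [_ [_ [_ [_ [_ [delta_ge2 locality]]]]]] i p pT.
have [S [sST pS cS1 cS2 regenS]] := locality i p pT; have := delta_ge2 i.
exists S; first by split => //; lia.
split=> [|E sES cE j jE]; first lia.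
have [_ [lcj _]] := regenS E sES cE j jE; apply: lin_comb_spans lcj.
by apply/subsetP => x; rewrite !inE => /andP[/negPf ->]; rewrite orbF.
Qed.

Hypothesis rankG : \rank G = k.

Lemma low_weight_codeword X : (rk G X < k)%N ->
  exists c, [/\ codeword G c, c != 0 & (wt c <= n - #|X|)%N].
Proof.
move=> ltXk; set A := trmx (cols G X).
have kerA : kermx A != 0.
  by rewrite -mxrank_eq0 mxrank_ker mxrank_tr subn_eq0 -ltnNge.
have [i kerAi] : exists i, row i (kermx A) != 0.
  apply/existsP; apply: contraR kerA => /existsPn kerA0; apply/eqP/row_matrixP => i.
  by rewrite row0; apply/eqP/negPn/kerA0.
set m := row i (kermx A).
have mA : m *m A = 0 by apply/eqP; rewrite -sub_kermx row_sub.
exists (m *m G); split; first by exists m.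
  apply: contra kerAi => /eqP mG0; apply/eqP.
  by apply: (row_free_inj (A := G)); rewrite ?mG0 ?mul0mx // /row_free rankG.
have -> : (n - #|X| = #|~: X|)%N by rewrite [RHS]cardsCs setCK card_ord.
apply/subset_leq_card/subsetP => j.
rewrite !inE; apply: contra => jX; apply/eqP.
have <- : (m *m A) 0 j = (m *m G) 0 j.
  by rewrite !mxE; apply: eq_bigr => a _; rewrite !mxE jX.
by rewrite mA mxE.
Qed.

Lemma min_dist_excess d X :
  is_min_dist G d -> (rk G X < k)%N -> (d + excess G X + k <= n.+1)%N.
Proof.
move=> [_ min_d] /(extend_to_corank_one rankG)[Y rkY exY].
have [|c [cwc c0 wtc]] := low_weight_codeword (X := Y); first lia.
have := min_d c cwc c0; have := rk_le_card G Y; rewrite /excess in exY *.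
have : (#|Y| <= n)%N by rewrite -[n in (_ <= n)%N]card_ord max_card.
lia.
Qed.

End Codes.

Theorem theorem2 (F : finFieldType) (n k d s : nat) (G : 'M[F]_(k, n))
  (T : 'I_s -> {set 'I_n}) (r delta : 'I_s -> nat)
  (Hs : (2 <= s)%N)
  (Hrank : \rank G = k)
  (Hd : is_min_dist G d)
  (Hloc : multiple_localities G T r delta)
  (Hsum : ((\sum_(i < s | (i < s.-1)%N)
              r i * ceil_div #|T i| (r i + delta i - 1)) + 1 <= k)%N)
  (Hj : forall j : 'I_s, (j < s.-1)%N ->
     let nn := fun i => #|T i| in
     let D := (Delta nn r delta j.+1 - Delta nn r delta j - 1)%N in
     (r j * ceil_div D (delta j - 1) + D < nn j)%N)
  (slast : 'I_s) (Hslast : nat_of_ord slast = s.-1) :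
  let nn := fun i => #|T i| in
  ((d : int) <= (n : int) - (k : int) + 1
     - (\sum_(i < s | (i < s.-1)%N)
          (ceil_div (nn i) (r i + delta i - 1) * (delta i - 1))%N : int)%R
     - (((ceil_div (k - \sum_(i < s | (i < s.-1)%N)
                          r i * ceil_div (nn i) (r i + delta i - 1))
                   (r slast) : int) - 1)
        * ((delta slast - 1)%N : int))%R)%R.
Proof.
cbv zeta.
have groups := localities_repair_groups Hloc.
case: Hloc => [Tdis [Tcover [Tne [r_mono [delta_mono [delta_ge2 locality]]]]]].
set c := fun i => ceil_div #|T i| (r i + delta i - 1).
have room (i : 'I_s) :
    i < s.-1 -> 0 < delta i - 1 /\ phase_room T r (fun i => delta i - 1) i (c i).
  move=> lt_is; split; first by have := delta_ge2 i; lia.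
  by have := Hj i lt_is; rewrite /= DeltaS addKn.
have [X0 _ [rkX0 exX0]] := phases_extension groups Tdis (leq_pred s) room.
set K := \sum_(i < s | i < s.-1) r i * c i in rkX0 Hsum.
set D := \sum_(i < s | i < s.-1) c i * (delta i - 1) in exX0.
have cover (p : 'I_n) : exists i, p \in T i.
  have : p \in \bigcup_(i < s) T i by rewrite Tcover inE.
  by case/bigcupP => i _; exists i.
have le_last (i : 'I_s) : i <= slast by rewrite Hslast -ltnS prednK ?ltn_ord //; lia.
have r_le (i : 'I_s) : r i <= r slast by exact/r_mono/le_last.
have e_ge (i : 'I_s) : delta slast - 1 <= delta i - 1 by exact/leq_sub2r/delta_mono/le_last.
have [|X ltXk [t [exX kt]]] := fill_rank groups Hrank cover r_le e_ge (K := K) (X0 := X0).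
  by rewrite rkX0; lia.
have bound := min_dist_excess Hrank Hd ltXk.
have r_gt0 : 0 < r slast.
  have [p pT] := set0Pn _ (Tne slast).
  by have [S [_ _ ? ? _]] := locality slast p pT; have := delta_ge2 slast; lia.
set C := ceil_div (k - K) (r slast).
have C_le : C <= t.+1 by rewrite leq_ceil_divLR //; lia.
have C_gt0 : 0 < C by rewrite ltnNge leq_ceil_divLR // mul0n; lia.
have : (C - 1) * (delta slast - 1) <= t * (delta slast - 1) by apply: leq_mul; lia.
rewrite -/c -/K -/D -/C (subzn C_gt0) -PoszM; lia.
Qed.
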